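(* For $n\ge1$, $\left|\Pi_n\wr C_2(1^11^1,1^11^2,1^12^2)\right|=\sum_{k=0}^n\binom{n}{k}\left\lfloor k/2 \right\rfloor!$.
   Context: For $n\ge0$ let $[n]=\{1,\dots,n\}$. A $2$-colored set partition of $[n]$ is a set partition of $[n]$ together with an assignment of a color from $\{1,2\}$ to each element; $\Pi_n\wr C_2$ is the set of these. For a set $S$ of patterns, $\Pi_n\wr C_2(S)$ is the set of such colored partitions avoiding every pattern in $S$ in the pattern sense. For the patterns used here: $\sigma$ contains $1^11^1$ iff two elements in the same block have the same color; $1^11^2$ iff there are $i<j$ in the same block with $i$ colored $1$ and $j$ colored $2$; $1^12^2$ iff there are $i<j$ in different blocks with $i$ colored $1$ and $j$ colored $2$. *)

From mathcomp Require Import all_boot.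
Set Implicit Arguments. Unset Strict Implicit. Unset Printing Implicit Defensive.

(* [n] = {1..n} is represented by 'I_n = {0..n-1} (order-preserving shift).
   Colors {1,2} are represented by 'I_2: color 1 = ord0, color 2 = ord_max (value 1). *)

Definition colored_partition (n : nat) :=
  ({set {set 'I_n}} * {ffun 'I_n -> 'I_2})%type.

Definition is_set_partition n (P : {set {set 'I_n}}) : bool :=
  partition P [set: 'I_n].

Definition same_block n (P : {set {set 'I_n}}) (i j : 'I_n) : bool :=
  [exists B in P, (i \in B) && (j \in B)].

Definition col_is n (c : {ffun 'I_n -> 'I_2}) (i : 'I_n) (k : nat) : bool :=
  (nat_of_ord (c i)) == k.-1.

Definition contains_11_11 n (x : colored_partition n) : bool :=
  [exists i : 'I_n, exists j : 'I_n,
     (i < j) && same_block x.1 i j && (x.2 i == x.2 j)].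

Definition contains_11_12 n (x : colored_partition n) : bool :=
  [exists i : 'I_n, exists j : 'I_n,
     [&& i < j, same_block x.1 i j, col_is x.2 i 1 & col_is x.2 j 2]].

Definition contains_11_22 n (x : colored_partition n) : bool :=
  [exists i : 'I_n, exists j : 'I_n,
     [&& i < j, ~~ same_block x.1 i j, col_is x.2 i 1 & col_is x.2 j 2]].

Definition avoiders n : {set colored_partition n} :=
  [set x : colored_partition n | [&& is_set_partition x.1,
      ~~ contains_11_11 x, ~~ contains_11_12 x & ~~ contains_11_22 x]].

From mathcomp Require Import all_boot.
From mathcomp Require Import zify.
Set Implicit Arguments. Unset Strict Implicit. Unset Printing Implicit Defensive.

(* Since no element colored 1 may precede one colored 2, the elements colored 2
   form an initial segment [1..m]; since two elements of a block have different colors and the earlier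
   one cannot be colored 1, every block is a singleton or a pair {i < j} with
   i <= m < j.  So an avoider is the same thing as an m together with a partial
   matching between [1..m] and [m+1..n], and there are
   sum_j C(m,j) C(n-m,j) j! of those.  Summing over m with
   sum_m C(m,j) C(n-m,j) = C(n+1,2j+1) = C(n,2j) + C(n,2j+1) gives the formula. *)

Fixpoint nmatchings (a b : nat) : nat :=
  if a is a'.+1 then nmatchings a' b + b * nmatchings a' b.-1 else 1.

Lemma nmatchingsE a b N : a < N ->
  nmatchings a b = \sum_(j < N) 'C(a, j) * 'C(b, j) * j`!.
Proof.
elim: a b N => [|a IHa] b [|N] //= ltaN.
  by rewrite big_ord_recl big1 => [|j _]; rewrite ?bin0 ?bin0n.
rewrite (IHa b N.+1 (ltnW ltaN)) (IHa b.-1 N ltaN).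
rewrite big_ord_recl [in RHS]big_ord_recl !bin0 -addnA big_distrr -big_split /=.
congr (_ + _); apply: eq_bigr => j _.
rewrite /bump add1n binS factS !mulnDl; congr (_ + _).
by rewrite mulnCA !mulnA -(mulnA _ _ b) (mulnC _ b) mul_bin_diag (mulnC j.+1) !mulnA.
Qed.

Lemma hockey_stick n a : \sum_(m < n.+1) 'C(m, a) = 'C(n.+1, a.+1).
Proof.
elim: n => [|n IHn]; last by rewrite big_ord_recr /= IHn [RHS]binS.
by rewrite big_ord1; case: a => [|a]; rewrite ?bin0n.
Qed.

Lemma sum_bin_mul_bin_sub n a b :
  \sum_(m < n.+1) 'C(m, a) * 'C(n - m, b) = 'C(n.+1, (a + b).+1).
Proof.
elim: n b => [|n IHn] [|b].
- by rewrite big_ord1; case: a.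
- by rewrite big_ord1 subnn muln0 addnS bin_small.
- by rewrite addn0 -hockey_stick; under eq_bigr do rewrite bin0 muln1.
rewrite big_ord_recr /= subnn muln0 addn0 addnS binS.
rewrite -(IHn b) -addnS -(IHn b.+1) -big_split /=.
by apply: eq_bigr => m _; rewrite -mulnDr subSn ?binS // -ltnS.
Qed.

Lemma big_ord_double (F : nat -> nat) N :
  \sum_(k < N.*2) F k = \sum_(j < N) (F j.*2 + F j.*2.+1).
Proof.
elim: N => [|N IHN]; first by rewrite !big_ord0.
by rewrite doubleS !big_ord_recr /= IHN addnA.
Qed.

Lemma sum_nmatchings n :
  \sum_(m < n.+1) nmatchings m (n - m) = \sum_(0 <= k < n.+1) 'C(n, k) * (k./2)`!.
Proof.
under [in LHS]eq_bigr => m _ do rewrite (nmatchingsE _ (ltn_ord m)).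
rewrite exchange_big /=.
under eq_bigr => j _ do rewrite -big_distrl /= sum_bin_mul_bin_sub addnn.
have le_n_2n : n.+1 <= n.+1.*2 by rewrite -addnn leq_addr.
rewrite big_mkord (big_ord_widen _ (fun k => 'C(n, k) * (k./2)`!) le_n_2n).
rewrite [RHS]big_mkcond (big_ord_double (fun k => if k < n.+1 then 'C(n, k) * (k./2)`! else 0)).
apply: eq_bigr => j _; rewrite /= doubleK uphalf_double binS mulnDl addnC.
by congr (_ + _); case: ltnP => // ltn; rewrite bin_small.
Qed.

Lemma sum_nat_of_bool (T : finType) (D : {pred T}) (P : pred T) :
  \sum_(i in D) (P i : nat) = #|[set i in D | P i]|.
Proof.
rewrite -sum1_card [LHS]big_mkcond [RHS]big_mkcond; apply: eq_bigr => i _.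
by rewrite !inE; case: (i \in D); case: (P i).
Qed.

Section Matchings.
Variable T : finType.
Implicit Types (A B : {set T}) (M : {set T * T}).

(* A partial matching between A and B, as its set of edges: an edge shares its
   A-end with another edge iff it shares its B-end. *)
Definition is_matching A B M : bool :=
  [forall p in M, (p.1 \in A) && (p.2 \in B)] &&
  [forall p in M, forall q in M, (p.1 == q.1) == (p.2 == q.2)].

Definition matchings A B := [set M | is_matching A B M].

Lemma is_matchingP A B M :
  reflect ((forall p, p \in M -> p.1 \in A /\ p.2 \in B) /\
           {in M &, forall p q, (p.1 == q.1) = (p.2 == q.2)})
          (is_matching A B M).
Proof.
apply: (iffP andP) => [[/forall_inP sub /forall_inP inj]|[sub inj]]; split.
- by move=> p /sub /andP.
- by move=> p q pM qM; move/forall_inP: (inj p pM) => /(_ q qM) /eqP.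
- by apply/forall_inP => p /sub [-> ->].
- by apply/forall_inP => p pM; apply/forall_inP => q qM; rewrite inj.
Qed.

Lemma matchings0 B : matchings set0 B = [set set0].
Proof.
apply/setP => M; rewrite !inE; apply/is_matchingP/eqP => [[sub _]|->].
  by apply/setP => p; rewrite inE; apply/negbTE/negP => /sub[]; rewrite inE.
by split=> p; rewrite inE.
Qed.

Section Remove.
Variables (A B : {set T}) (a : T).
Hypothesis Aa : a \in A.

Lemma matchings_unmatched :
  [set M in matchings A B | [forall b, (a, b) \notin M]] = matchings (A :\ a) B.
Proof.
apply/setP => M; rewrite !inE; apply/andP/is_matchingP.
  move=> [/is_matchingP [sub inj] /forallP free]; split=> // p pM.
  have [pA pB] := sub p pM; rewrite !inE pA pB andbT; split=> //.
  by apply: contraTneq (free p.2) => <-; rewrite -surjective_pairing pM.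
move=> [sub inj]; split.
  by apply/is_matchingP; split=> // p /sub[]; rewrite inE => /andP[_ ->] ->.
by apply/forallP => b; apply/negP => /sub[]; rewrite !inE eqxx.
Qed.

Lemma card_matchings_matched b : b \in B ->
  #|[set M in matchings A B | (a, b) \in M]| = #|matchings (A :\ a) (B :\ b)|.
Proof.
move=> Bb; pose add M := (a, b) |: M.
have add_inj : {in matchings (A :\ a) (B :\ b) &, injective add}.
  move=> M1 M2; rewrite !inE => /is_matchingP[sub1 _] /is_matchingP[sub2 _].
  have fresh M : (forall p, p \in M -> p.1 \in A :\ a /\ p.2 \in B :\ b) ->
      (a, b) \notin M by move=> sub; apply/negP => /sub[]; rewrite !inE eqxx.
  by rewrite /add => eqM; rewrite -(setU1K (fresh _ sub1)) -(setU1K (fresh _ sub2)) eqM.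
rewrite -(card_in_imset add_inj); apply: eq_card => M; rewrite !inE.
apply/andP/imsetP => [[/is_matchingP[sub inj] abM]|[M' + ->]].
  exists (M :\ (a, b)); last by rewrite /add setD1K.
  rewrite inE; apply/is_matchingP; split; last first.
    by move=> p q /setD1P[_ pM] /setD1P[_ qM]; apply: inj.
  move=> p /setD1P[ne pM]; have [pA pB] := sub _ pM.
  have /= e := inj _ _ pM abM.
  have ne1 : p.1 != a.
    apply: contraNneq ne => pa; move: e; rewrite pa eqxx => /esym/eqP pb.
    by rewrite [p]surjective_pairing pa pb.
  by rewrite !inE pA pB -e ne1.
rewrite inE => /is_matchingP[sub inj]; split; last by rewrite !inE eqxx.
apply/is_matchingP; split.
  move=> p /setU1P[-> | /sub[]]; first by rewrite Aa Bb.
  by rewrite !inE => /andP[_ ->] /andP[_ ->].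
have out p : p \in M' -> (p.1 == a) = false /\ (p.2 == b) = false.
  by move/sub; rewrite !inE => -[/andP[/negbTE -> _] /andP[/negbTE -> _]].
move=> p q /setU1P[-> | pM] /setU1P[-> | qM] //=; rewrite ?eqxx //.
- by rewrite eq_sym [b == _]eq_sym; have [-> ->] := out q qM.
- by have [-> ->] := out p pM.
- exact: inj.
Qed.

Lemma card_matchings_rec :
  #|matchings A B| = #|matchings (A :\ a) B| + \sum_(b in B) #|matchings (A :\ a) (B :\ b)|.
Proof.
have partner M : M \in matchings A B ->
    [forall b, (a, b) \notin M] + \sum_(b in B) ((a, b) \in M) = 1.
  rewrite inE => /is_matchingP[sub inj].
  have [/forallP free|/forallPn[b0 /negbNE abM]] := boolP [forall b, (a, b) \notin M].
    by rewrite big1 // => b _; rewrite (negbTE (free b)).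
  rewrite (bigD1 b0) ?(proj2 (sub _ abM)) //= abM big1 // => b /andP[_ ne].
  case abM': ((a, b) \in M) => //.
  by move: (inj _ _ abM abM'); rewrite /= eqxx eq_sym (negbTE ne).
rewrite -sum1_card -(eq_bigr _ partner) big_split /= exchange_big /=.
rewrite sum_nat_of_bool matchings_unmatched; congr (_ + _).
by apply: eq_bigr => b Bb; rewrite sum_nat_of_bool card_matchings_matched.
Qed.

End Remove.

Lemma card_matchings A B : #|matchings A B| = nmatchings #|A| #|B|.
Proof.
move cardA: #|A| => k; elim: k A B cardA => [|k IHk] A B cardA.
  by move/eqP: cardA; rewrite cards_eq0 => /eqP->; rewrite matchings0 cards1.
have /card_gt0P[a Aa] : 0 < #|A| by rewrite cardA.
have cardAa : #|A :\ a| = k by move: cardA; rewrite (cardsD1 a) Aa => -[].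
rewrite (card_matchings_rec _ Aa) IHk //=; congr (_ + _).
rewrite -sum_nat_const; apply: eq_bigr => b Bb.
by rewrite IHk // (cardsD1 b B) Bb.
Qed.

End Matchings.

Lemma eq_equivalence_partition (T : finType) (R R' : rel T) (D : {set T}) :
  R =2 R' -> equivalence_partition R D = equivalence_partition R' D.
Proof. by move=> eqR; apply: eq_imset => x; apply/setP => y; rewrite !inE eqR. Qed.

Lemma ord2E (x : 'I_2) : x = if val x == 1 then ord_max else ord0.
Proof. by apply: val_inj; case: x => [[|[|]]]. Qed.

Section Avoiders.
Variable n : nat.
Local Notation T := 'I_n.
Implicit Types (i j k : T) (P : {set {set T}}) (c : {ffun T -> 'I_2}) (M : {set T * T}).

Section SameBlock.
Variable P : {set {set T}}.
Hypothesis partP : is_set_partition P.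

Let trivP : trivIset P := partition_trivIset partP.
Let coverP i : i \in cover P.
Proof. by have [/eqP-> _ _] := and3P partP; rewrite inE. Qed.

Lemma same_blockE i j : same_block P i j = (j \in pblock P i).
Proof.
apply/existsP/idP => [[B /and3P[PB iB jB]]|jPi]; first by rewrite (def_pblock trivP PB iB).
by exists (pblock P i); rewrite pblock_mem // jPi mem_pblock coverP.
Qed.

Lemma same_block_refl i : same_block P i i.
Proof. by rewrite same_blockE mem_pblock coverP. Qed.

Lemma same_blockC i j : same_block P i j = same_block P j i.
Proof. by rewrite !same_blockE -!eq_pblock // eq_sym. Qed.

Lemma same_block_trans j i k : same_block P i j -> same_block P j k -> same_block P i k.
Proof. by rewrite !same_blockE => jPi; rewrite (same_pblock trivP jPi). Qed.

End SameBlock.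

Lemma col_is1 c i : col_is c i 1 = ~~ col_is c i 2.
Proof. by rewrite /col_is; case: (c i) => [[|[|]]]. Qed.

Lemma eq_col c c' i j : (c i == c' j) = (col_is c i 2 == col_is c' j 2).
Proof. by rewrite /col_is; case: (c i) => [[|[|]] ?]; case: (c' j) => [[|[|]] ?]. Qed.

Section AvoiderStructure.
Variables (P : {set {set T}}) (c : {ffun T -> 'I_2}).
Hypothesis avPc : (P, c) \in avoiders n.

Lemma avoiders_partition : is_set_partition P.
Proof. by move: avPc; rewrite inE => /andP[]. Qed.

Lemma avoiders_col2_prefix i j : i < j -> col_is c j 2 -> col_is c i 2.
Proof.
move=> ij cj; apply: contraT; rewrite -col_is1 => ci.
move: avPc; rewrite inE => /and4P[_ _ /existsPn no12 /existsPn no22].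
move: (no12 i) (no22 i) => /existsPn/(_ j) + /existsPn/(_ j).
by rewrite ij ci cj !andbT; case: same_block.
Qed.

Lemma avoiders_block_pair i j : i < j -> same_block P i j ->
  col_is c i 2 /\ ~~ col_is c j 2.
Proof.
move=> ij ijP; move: avPc; rewrite inE => /and4P[_ /existsPn no11 /existsPn no12 _].
move: (no11 i) (no12 i) => /existsPn/(_ j) + /existsPn/(_ j).
rewrite ij ijP eq_col !col_is1 /=.
by case: (col_is c i 2); case: (col_is c j 2).
Qed.

Lemma avoiders_block_col_inj i j : same_block P i j -> c i = c j -> i = j.
Proof.
have partP := avoiders_partition.
move=> ijP /eqP; rewrite eq_col; case: (ltngtP i j) => [ij|ji|/val_inj //].
  by have [-> /negbTE->] := avoiders_block_pair ij ijP.
rewrite same_blockC // in ijP.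
by have [-> /negbTE->] := avoiders_block_pair ji ijP.
Qed.

End AvoiderStructure.

Definition pre (m : nat) : {set T} := [set i : T | i < m].

Lemma card_pre m : m <= n -> #|pre m| = m.
Proof.
elim: m => [|m IHm] lemn.
  by apply/eqP; rewrite cards_eq0; apply/eqP/setP => i; rewrite !inE.
have -> : pre m.+1 = Ordinal lemn |: pre m by apply/setP => i; rewrite !inE ltnS leq_eqVlt.
by rewrite cardsU1 IHm ?inE ?ltnn // ltnW.
Qed.

Lemma down_closed_pre (A : {set T}) :
  (forall i j : T, i < j -> j \in A -> i \in A) -> A = pre #|A|.
Proof.
move=> downA; apply/setP => i; rewrite inE; apply/idP/idP => [Ai|].
  have : pre i.+1 \subset A.
    apply/subsetP => j; rewrite inE ltnS leq_eqVlt => /orP[/eqP/val_inj-> //|ji].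
    exact: downA ji Ai.
  by move/subset_leq_card; rewrite card_pre.
apply: contraLR; rewrite -leqNgt => notAi; have : A \subset pre i.
  apply/subsetP => j Aj; rewrite inE ltnNge; apply: contra notAi.
  by rewrite leq_eqVlt => /orP[/eqP/val_inj-> //|/downA]; apply.
by move/subset_leq_card; rewrite card_pre // ltnW.
Qed.

Definition colored2 c : {set T} := [set i | col_is c i 2].

Definition block_pairs P : {set T * T} :=
  [set p : T * T | (p.1 < p.2) && same_block P p.1 p.2].

Definition matching_rel M : rel T :=
  fun i j => [|| i == j, (i, j) \in M | (j, i) \in M].

Definition encode (x : colored_partition n) : 'I_n.+1 * {set T * T} :=
  (inord #|colored2 x.2|, block_pairs x.1).

Definition decode (z : 'I_n.+1 * {set T * T}) : colored_partition n :=
  (equivalence_partition (matching_rel z.2) [set: T],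
   [ffun i : T => if i < z.1 then ord_max else ord0]).

Definition codes := [set z : 'I_n.+1 * {set T * T} | is_matching (pre z.1) (~: pre z.1) z.2].

Lemma card_colored2 c : #|colored2 c| < n.+1.
Proof. by rewrite ltnS (leq_trans (max_card _)) ?card_ord. Qed.

Lemma matching_rel_block_pairs P : is_set_partition P ->
  matching_rel (block_pairs P) =2 same_block P.
Proof.
move=> partP i j; rewrite /matching_rel !inE /= -val_eqE /=.
by case: ltngtP => [_|_|/val_inj->]; rewrite ?orbF ?same_block_refl // same_blockC.
Qed.

Section Encode.
Variables (P : {set {set T}}) (c : {ffun T -> 'I_2}).
Hypothesis avPc : (P, c) \in avoiders n.

Let colored2_pre : colored2 c = pre #|colored2 c|.
Proof.
by apply: down_closed_pre => i j ij; rewrite !inE; exact: (avoiders_col2_prefix avPc ij).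
Qed.

Lemma decode_encode : decode (encode (P, c)) = (P, c).
Proof.
have partP := avoiders_partition avPc.
rewrite /decode /encode /= inordK ?card_colored2 //; congr (_, _).
  rewrite -[RHS](equivalence_partition_pblock partP).
  by apply: eq_equivalence_partition => i j; rewrite matching_rel_block_pairs ?same_blockE.
apply/ffunP => i; rewrite ffunE [RHS]ord2E.
by move/setP: colored2_pre => /(_ i); rewrite !inE => <-.
Qed.

Lemma encode_codes : encode (P, c) \in codes.
Proof.
have partP := avoiders_partition avPc.
rewrite inE /encode /= inordK ?card_colored2 // -colored2_pre.
apply/is_matchingP; split => [p|p q].
  by rewrite !inE => /andP[lt_p samep]; apply: (avoiders_block_pair avPc lt_p samep).
rewrite !inE => /andP[lt_p samep] /andP[lt_q sameq].
have [p1 /negbTE p2] := avoiders_block_pair avPc lt_p samep.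
have [q1 /negbTE q2] := avoiders_block_pair avPc lt_q sameq.
apply/eqP/eqP => [e1|e2].
  apply: (avoiders_block_col_inj avPc); last by apply/eqP; rewrite eq_col p2 q2.
  by apply: (same_block_trans partP _ sameq); rewrite -e1 same_blockC.
apply: (avoiders_block_col_inj avPc); last by apply/eqP; rewrite eq_col p1 q1.
by apply: (same_block_trans partP samep); rewrite e2 same_blockC.
Qed.

End Encode.

Section Decode.
Variables (m : 'I_n.+1) (M : {set T * T}).
Hypothesis matchM : is_matching (pre m) (~: pre m) M.

Lemma matching_pair_cross p : p \in M -> p.1 < m <= p.2.
Proof. by case/is_matchingP: matchM => sub _ /sub[]; rewrite !inE -leqNgt => -> ->. Qed.

Lemma matching_rel_lt i j : i < j -> matching_rel M i j = ((i, j) \in M).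
Proof.
move=> ij; rewrite /matching_rel -val_eqE /= (ltn_eqF ij) /=.
case jiM: ((j, i) \in M); rewrite ?orbF //.
by have /= := matching_pair_cross jiM; lia.
Qed.

Lemma matching_relC i j : matching_rel M i j = matching_rel M j i.
Proof. by rewrite /matching_rel eq_sym; congr (_ || _); apply: orbC. Qed.

Lemma matching_rel_trans j i k :
  matching_rel M i j -> matching_rel M j k -> matching_rel M i k.
Proof.
have [<- //|ne_ij] := eqVneq i j; have [<- //|ne_jk] := eqVneq j k.
case/is_matchingP: matchM => _ inj.
rewrite /matching_rel (negbTE ne_ij) (negbTE ne_jk) /=.
case/orP=> [ijM|jiM] /orP[jkM|kjM].
- by have /= := matching_pair_cross ijM; have /= := matching_pair_cross jkM; lia.
- by have /= := inj _ _ ijM kjM; rewrite eqxx => ->.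
- by have /= := inj _ _ jiM jkM; rewrite eqxx => /esym->.
- by have /= := matching_pair_cross jiM; have /= := matching_pair_cross kjM; lia.
Qed.

Lemma matching_rel_equiv : {in [set: T] & &, equivalence_rel (matching_rel M)}.
Proof.
move=> i j k _ _ _; split=> [|ij]; first by rewrite /matching_rel eqxx.
by apply/idP/idP; apply: matching_rel_trans; rewrite // matching_relC.
Qed.

Let partD : is_set_partition (decode (m, M)).1.
Proof. exact: equivalence_partitionP matching_rel_equiv. Qed.

Lemma same_block_decode : same_block (decode (m, M)).1 =2 matching_rel M.
Proof.
move=> i j; rewrite same_blockE //.
exact: pblock_equivalence_partition matching_rel_equiv _ _ (in_setT i) (in_setT j).
Qed.

Lemma col_is_decode i : col_is (decode (m, M)).2 i 2 = (i < m).
Proof. by rewrite /col_is ffunE; case: ifP. Qed.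

Lemma decode_avoiders : decode (m, M) \in avoiders n.
Proof.
rewrite inE partD /= !negb_exists; apply/and3P; split; apply/forallP => i;
  rewrite negb_exists; apply/forallP => j; apply/negP.
- case/andP=> /andP[ij]; rewrite same_block_decode matching_rel_lt // eq_col !col_is_decode.
  by move=> /matching_pair_cross /= /andP[-> mj]; rewrite ltnNge mj.
- by case/and4P=> ij _; rewrite col_is1 !col_is_decode; lia.
- by case/and4P=> ij _; rewrite col_is1 !col_is_decode; lia.
Qed.

Lemma encode_decode : encode (decode (m, M)) = (m, M).
Proof.
rewrite /encode.
have -> : colored2 (decode (m, M)).2 = pre m by apply/setP => i; rewrite !inE col_is_decode.
rewrite card_pre ?inord_val -1?ltnS //; congr (_, _).
apply/setP => p; rewrite inE; apply/andP/idP => [[lt_p]|pM].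
  by rewrite same_block_decode matching_rel_lt // -surjective_pairing.
have /andP[p1m mp2] := matching_pair_cross pM.
by rewrite same_block_decode matching_rel_lt ?(leq_trans p1m mp2) // -surjective_pairing.
Qed.

End Decode.

Lemma card_avoiders : #|avoiders n| = \sum_(m < n.+1) #|matchings (pre m) (~: pre m)|.
Proof.
have encode_inj : {in avoiders n &, injective encode}.
  by apply: (can_in_inj (g := decode)) => -[P c]; apply: decode_encode.
have encode_onto : encode @: avoiders n = codes.
  apply/setP => z; apply/imsetP/idP => [[[P c] avPc ->]|]; first exact: encode_codes.
  case: z => m M; rewrite inE => matchM.
  by exists (decode (m, M)); rewrite ?decode_avoiders ?encode_decode.
rewrite -(card_in_imset encode_inj) encode_onto.
under eq_bigr do rewrite -sum1dep_card.
by rewrite pair_big_dep -sum1dep_card; apply: eq_bigl.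
Qed.

End Avoiders.

Theorem mainTheorem14 (n : nat) : 1 <= n ->
  #|avoiders n| = \sum_(0 <= k < n.+1) 'C(n, k) * (k./2)`!.
Proof.
move=> _; rewrite card_avoiders -sum_nmatchings; apply: eq_bigr => m _.
have le_mn : m <= n by rewrite -ltnS.
have cardC : #|~: pre n m| = n - m by rewrite cardsCs card_ord setCK card_pre.
by rewrite card_matchings cardC card_pre.
Qed.
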